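(* Consider the system $x_{k+1}=Ax_k+Bw_k$, $y^i_k=C^ix_k+D^iv^i_k$ ($i\in\mathcal V=\{1,\dots,N\}$) in the noise-free case, i.e. $\underline w=\overline w=0$ and $\underline v^i=\overline v^i=0$ for all $i$ (so $w_k=0$, $v^i_k=0$), and run the DIO (described in the context) with gains $L^i,\Gamma^i$ and $d\in\mathbb N$ network iterations. Then for every $k\ge0$ the collective framer error satisfies $e_{k+1}=H_k\hat A e_k$, where $\hat A=\mathrm{diag}(\hat A^1,\dots,\hat A^N)$, $\hat A^i=\begin{bmatrix}(\tilde A^i)^+ & (\tilde A^i)^-\\ (\tilde A^i)^- & (\tilde A^i)^+\end{bmatrix}$, and $H_k\in\{0,1\}^{2Nn\times 2Nn}$ is the matrix whose row $\underline{\mathrm{id}}(i,s)$ equals $\mathbf e^\top_{\underline{\mathrm{id}}(j^*,s)}$ with $j^*=\min\big(\arg\max_{j\in\mathcal N_i^d}(\underline x^{j,0}_{k+1})_s\big)$, and whose row $\overline{\mathrm{id}}(i,s)$ equals $\mathbf e^\top_{\overline{\mathrm{id}}(j^\dagger,s)}$ with $j^\dagger=\min\big(\arg\min_{j\in\mathcal N_i^d}(\overline x^{j,0}_{k+1})_s\big)$, for all $i\in\mathcal V$, $s\in\{1,\dots,n\}$. Moreover, $H_k\hat A\in\mathcal F$, where $\mathcal F$ is the set of matrices $M\in\mathbb R^{2Nn\times2Nn}$ such that for every $i\in\mathcal V$ and $s\in\{1,\dots,n\}$, row $\underline{\mathrm{id}}(i,s)$ of $M$ equals row $\underline{\mathrm{id}}(j,s)$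 of $\hat A$ for some $j\in\mathcal N_i^d$, and row $\overline{\mathrm{id}}(i,s)$ of $M$ equals row $\overline{\mathrm{id}}(j',s)$ of $\hat A$ for some $j'\in\mathcal N_i^d$ (so $\mathcal F$ has independent row uncertainties).
   Context: Entrywise inequalities, max, min; $M^+_{ij}=\max\{M_{ij},0\}$, $M^-=M^+-M$. $G=(\mathcal V,E)$ is a directed graph, $\mathcal N_i=\{j:(i,j)\in E\}\cup\{i\}$, $\mathcal N_i^d$ is the set of nodes reachable from $i$ by a directed path of length at most $d$ (including $i$). DIO: $T^i=I_n-\Gamma^iC^i$, $\tilde A^i=T^iA-L^iC^i$; initialize $\underline x^i_0=\underline x_0$, $\overline x^i_0=\overline x_0$; for each $k$, each agent computes (noise bounds being zero here) $\underline x^{i,0}_{k+1}=(\tilde A^i)^+\underline x^i_k-(\tilde A^i)^-\overline x^i_k+L^iy^i_k+\Gamma^iy^i_{k+1}$, $\overline x^{i,0}_{k+1}=(\tilde A^i)^+\overline x^i_k-(\tilde A^i)^-\underline x^i_k+L^iy^i_k+\Gamma^iy^i_{k+1}$, and then $\underline x^i_{k+1}=\max_{j\in\mathcal N_i^d}\underline x^{j,0}_{k+1}$, $\overline x^i_{k+1}=\min_{j\in\mathcal N_i^d}\overline x^{j,0}_{k+1}$ (obtained by $d$ rounds of max/min over $\mathcal N_i$). Errors: $\underline e^i_k=x_k-\underline x^i_k$, $\overline e^i_k=\overline x^i_k-x_k$, and $e_k=[(\underline e^1_k)^\top\ (\overline e^1_k)^\top\ \cdots\ (\underline e^N_k)^\top\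 (\overline e^N_k)^\top]^\top\in\mathbb R^{2Nn}$. Indices (1-based): $\underline{\mathrm{id}}(i,s)=2n(i-1)+s$, $\overline{\mathrm{id}}(i,s)=2n(i-1)+n+s$, the positions of $(\underline e^i)_s$ and $(\overline e^i)_s$ in $e$; $\mathbf e_m$ is the $m$-th standard basis vector of $\mathbb R^{2Nn}$. *)

From HB Require Import structures.
From mathcomp Require Import all_boot all_order all_algebra.
Set Implicit Arguments. Unset Strict Implicit. Unset Printing Implicit Defensive.
Import Order.TTheory GRing.Theory Num.Theory.
Local Open Scope ring_scope.

Definition pospart (R : realDomainType) m n (M : 'M[R]_(m, n)) : 'M[R]_(m, n) :=
  map_mx (fun a => Num.max a 0) M.
Definition negpart (R : realDomainType) m n (M : 'M[R]_(m, n)) : 'M[R]_(m, n) :=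
  pospart M - M.

Fixpoint walk_le (N : nat) (E : rel 'I_N) (d : nat) (i j : 'I_N) : bool :=
  match d with
  | 0 => i == j
  | d'.+1 => walk_le E d' i j || [exists l, E i l && walk_le E d' l j]
  end.

Definition Nd (N : nat) (E : rel 'I_N) (d : nat) (i : 'I_N) : {set 'I_N} :=
  [set j | walk_le E d i j].

(* Stacked indices (0-based): block i occupies positions i*2n .. i*2n+2n-1;
   lower component s is at i*2n+s, upper component s at i*2n+n+s. *)
Lemma stk_proof (N n : nat) (i : 'I_N) (r : 'I_(n + n)) :
  (i * (n + n) + r < N * (n + n))%N.
Proof.
have hi := ltn_ord i; have hr := ltn_ord r.
apply: (leq_trans (n := i * (n + n) + (n + n))); first by rewrite ltn_add2l.
by rewrite -[X in (_ + X <= _)%N]mul1n -mulnDl addn1 leq_mul2r hi orbT.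
Qed.

Definition stk (N n : nat) (i : 'I_N) (r : 'I_(n + n)) : 'I_(N * (n + n)) :=
  Ordinal (stk_proof i r).
Definition lid (N n : nat) (i : 'I_N) (s : 'I_n) := stk i (lshift n s).
Definition uid (N n : nat) (i : 'I_N) (s : 'I_n) := stk i (rshift n s).

Lemma blk_proof (N n : nat) (a : 'I_(N * (n + n))) : (a %/ (n + n) < N)%N.
Proof.
have ha : (nat_of_ord a < N * (n + n))%N := ltn_ord a.
move: (nat_of_ord a) ha => a' ha.
have hn : (0 < n + n)%N.
  by rewrite lt0n; apply/eqP => h; move: ha; rewrite h muln0.
by rewrite ltn_divLR.
Qed.

Lemma off_proof (N n : nat) (a : 'I_(N * (n + n))) : (a %% (n + n) < n + n)%N.
Proof.
have ha : (nat_of_ord a < N * (n + n))%N := ltn_ord a.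
move: (nat_of_ord a) ha => a' ha.
have hn : (0 < n + n)%N.
  by rewrite lt0n; apply/eqP => h; move: ha; rewrite h muln0.
by rewrite ltn_pmod.
Qed.

Definition blk (N n : nat) (a : 'I_(N * (n + n))) : 'I_N := Ordinal (blk_proof a).
Definition off (N n : nat) (a : 'I_(N * (n + n))) : 'I_(n + n) := Ordinal (off_proof a).

Section DIO.
Variables (R : realFieldType) (n N : nat) (p : 'I_N -> nat).
Variables (E : rel 'I_N) (d : nat).
Variables (A : 'M[R]_n) (C : forall i, 'M[R]_(p i, n)) (L Gam : forall i, 'M[R]_(n, p i)).
Variables (xl0 xu0 : 'cV[R]_n).
Variable (y : forall i, nat -> 'cV[R]_(p i)).

Definition Atil (i : 'I_N) : 'M[R]_n := (1%:M - Gam i *m C i) *m A - L i *m C i.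

Definition Ahat_i (i : 'I_N) : 'M[R]_(n + n) :=
  block_mx (pospart (Atil i)) (negpart (Atil i)) (negpart (Atil i)) (pospart (Atil i)).

Definition Ahat : 'M[R]_(N * (n + n)) :=
  \matrix_(a, b) (if blk a == blk b then Ahat_i (blk a) (off a) (off b) else 0).

(* local (pre-consensus) framers \underline x^{j,0}_{k+1}, \overline x^{j,0}_{k+1},
   from the current framers xl, xu at time k *)
Definition prel (xl xu : 'I_N -> 'cV[R]_n) (k : nat) (j : 'I_N) : 'cV[R]_n :=
  pospart (Atil j) *m xl j - negpart (Atil j) *m xu j + L j *m y j k + Gam j *m y j k.+1.
Definition preu (xl xu : 'I_N -> 'cV[R]_n) (k : nat) (j : 'I_N) : 'cV[R]_n :=
  pospart (Atil j) *m xu j - negpart (Atil j) *m xl j + L j *m y j k + Gam j *m y j k.+1.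

(* max / min over N_i^d (which contains i) *)
Definition nbmax (f : 'I_N -> R) (i : 'I_N) : R := \big[Num.max/f i]_(j in Nd E d i) f j.
Definition nbmin (f : 'I_N -> R) (i : 'I_N) : R := \big[Num.min/f i]_(j in Nd E d i) f j.

Fixpoint dio (k : nat) : ('I_N -> 'cV[R]_n) * ('I_N -> 'cV[R]_n) :=
  match k with
  | 0 => (fun _ => xl0, fun _ => xu0)
  | k'.+1 =>
      let xl := (dio k').1 in let xu := (dio k').2 in
      (fun i => \col_s nbmax (fun j => prel xl xu k' j s 0) i,
       fun i => \col_s nbmin (fun j => preu xl xu k' j s 0) i)
  end.

Definition xlow (i : 'I_N) (k : nat) : 'cV[R]_n := (dio k).1 i.
Definition xup (i : 'I_N) (k : nat) : 'cV[R]_n := (dio k).2 i.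
(* \underline x^{j,0}_{k+1} and \overline x^{j,0}_{k+1} *)
Definition xlow0 (j : 'I_N) (k : nat) : 'cV[R]_n := prel (dio k).1 (dio k).2 k j.
Definition xup0 (j : 'I_N) (k : nat) : 'cV[R]_n := preu (dio k).1 (dio k).2 k j.

Definition errvec (x : nat -> 'cV[R]_n) (k : nat) : 'cV[R]_(N * (n + n)) :=
  \col_a (col_mx (x k - xlow (blk a) k) (xup (blk a) k - x k)) (off a) 0.

Definition jstar (k : nat) (i : 'I_N) (s : 'I_n) : 'I_N :=
  let Am := [set j in Nd E d i | [forall j' in Nd E d i, xlow0 j' k s 0 <= xlow0 j k s 0]] in
  odflt i [pick j in Am | [forall j' in Am, (j <= j')%N]].
Definition jdag (k : nat) (i : 'I_N) (s : 'I_n) : 'I_N :=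
  let Am := [set j in Nd E d i | [forall j' in Nd E d i, xup0 j k s 0 <= xup0 j' k s 0]] in
  odflt i [pick j in Am | [forall j' in Am, (j <= j')%N]].

Definition Hsel (k : nat) : 'M[R]_(N * (n + n)) :=
  \matrix_(a, b)
    ((b == match split (off a) with
           | inl s => lid (jstar k (blk a) s) s
           | inr s => uid (jdag k (blk a) s) s
           end)%:R).

Definition inF (M : 'M[R]_(N * (n + n))) : Prop :=
  forall (i : 'I_N) (s : 'I_n),
    (exists2 j, j \in Nd E d i & row (lid i s) M = row (lid j s) Ahat) /\
    (exists2 j', j' \in Nd E d i & row (uid i s) M = row (uid j' s) Ahat).

End DIO.

From HB Require Import structures.
From mathcomp Require Import all_boot all_order all_algebra.
Set Implicit Arguments. Unset Strict Implicit. Unset Printing Implicit Defensive.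
Import Order.TTheory GRing.Theory Num.Theory.
Local Open Scope ring_scope.

(* Without noise the true state obeys the observer recursion
   x_{k+1} = Atil^j x_k + L^j y^j_k + Gam^j y^j_{k+1}; writing
   Atil^j = (Atil^j)^+ - (Atil^j)^-, the error of agent j's local framers is
   Ahat^j e^j_k, the j-th block of Ahat e_k.  The max/min consensus step copies
   each component from a single neighbour in N_i^d, the least-indexed maximiser
   (resp. minimiser), so each entry of e_{k+1} is the entry of Ahat e_k that
   H_k selects, and H_k selects only rows belonging to agents of N_i^d. *)

Section BigMaxArg.
Context {disp : Order.disp_t} {T : orderType disp} {I : finType}.

Lemma bigmax_argmax (S : {pred I}) (f : I -> T) i j :
  i \in S -> j \in S -> (forall j', j' \in S -> f j' <= f j)%O ->
  \big[Order.max/f i]_(j' in S) f j' = f j.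
Proof.
move=> Si Sj j_max; apply/le_anti.
by rewrite bigmax_le ?j_max ?le_bigmax_cond.
Qed.

Lemma bigmin_argmin (S : {pred I}) (f : I -> T) i j :
  i \in S -> j \in S -> (forall j', j' \in S -> f j <= f j')%O ->
  \big[Order.min/f i]_(j' in S) f j' = f j.
Proof.
move=> Si Sj j_min; apply/le_anti.
by rewrite le_bigmin ?j_min ?bigmin_le_cond.
Qed.

End BigMaxArg.

Lemma pick_least_mem N (S : {set 'I_N}) i0 j : j \in S ->
  odflt i0 [pick j in S | [forall j' in S, (j <= j')%N]] \in S.
Proof.
move=> Sj; case: pickP => [j' /andP[] // | no_least].
case: (arg_minnP val Sj) => m Sm m_least.
by have := no_least m; rewrite /= (Sm : m \in S) => /negbT/forall_inPn[j' /m_least ->].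
Qed.

Lemma walk_le_refl N (E : rel 'I_N) d i : walk_le E d i i.
Proof. by elim: d => [|d IHd] /=; rewrite ?eqxx ?IHd. Qed.

Lemma Nd_refl N (E : rel 'I_N) d i : i \in Nd E d i.
Proof. by rewrite inE walk_le_refl. Qed.

Section StackedIndex.
Variables N n : nat.

Lemma blk_stk (i : 'I_N) (r : 'I_(n + n)) : blk (stk i r) = i.
Proof.
apply: val_inj => /=.
by rewrite divnMDl ?divn_small ?addn0 // (leq_ltn_trans _ (ltn_ord r)).
Qed.

Lemma off_stk (i : 'I_N) (r : 'I_(n + n)) : off (stk i r) = r.
Proof. by apply: val_inj; rewrite /= modnMDl modn_small. Qed.

Lemma stk_blk_off (a : 'I_(N * (n + n))) : stk (blk a) (off a) = a.
Proof. by apply: val_inj; rewrite /= -divn_eq. Qed.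

Lemma stk_ind (P : 'I_(N * (n + n)) -> Prop) :
  (forall i s, P (lid i s)) -> (forall i s, P (uid i s)) -> forall a, P a.
Proof.
move=> Plid Puid a; rewrite -[a]stk_blk_off -[off a]splitK.
by case: split => s; [apply: Plid | apply: Puid].
Qed.

Lemma big_stk (V : nmodType) (F : 'I_(N * (n + n)) -> V) :
  \sum_a F a = \sum_(i < N) \sum_(r < n + n) F (stk i r).
Proof.
rewrite pair_big /= (reindex (fun ir : 'I_N * 'I_(n + n) => stk ir.1 ir.2)) //=.
exists (fun a => (blk a, off a)) => [[i r] _ | a _] /=.
  by rewrite blk_stk off_stk.
by rewrite stk_blk_off.
Qed.

Lemma blkdiag_mulmxE (R : pzSemiRingType) m (M : 'I_N -> 'M[R]_(n + n))
    (X : 'M[R]_(N * (n + n), m)) i r c :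
  ((\matrix_(a, b) (if blk a == blk b then M (blk a) (off a) (off b) else 0))
     *m X) (stk i r) c
  = (M i *m \matrix_(r', c') X (stk i r') c') r c.
Proof.
rewrite !mxE big_stk (bigD1 i) //= [X in _ + X = _]big1 ?addr0.
  by apply: eq_bigr => r' _; rewrite !mxE !blk_stk !off_stk eqxx.
move=> j ji; apply: big1 => r' _.
by rewrite !mxE !blk_stk eq_sym (negPf ji) mul0r.
Qed.

End StackedIndex.

Lemma mul_select_mxE (R : pzSemiRingType) m k l (f : 'I_m -> 'I_k)
    (X : 'M[R]_(k, l)) a c :
  ((\matrix_(a', b) (b == f a')%:R) *m X) a c = X (f a) c.
Proof.
rewrite !mxE (bigD1 (f a)) //= big1 ?addr0 => [|b /negPf fa_b].
  by rewrite mxE eqxx mul1r.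
by rewrite mxE fa_b mul0r.
Qed.

Lemma subrDDB (V : zmodType) (a b e f c : V) :
  a - b + c - (e - f + c) = (a - e) + (f - b).
Proof.
by rewrite opprD addrACA subrr addr0 opprB [f - e]addrC addrACA [- b + f]addrC.
Qed.

Lemma framer_error_step (R : pzRingType) m l (P Q : 'M[R]_m)
    (x x' xl xu c : 'M[R]_(m, l)) :
  x' = (P - Q) *m x + c ->
  col_mx (x' - (P *m xl - Q *m xu + c)) (P *m xu - Q *m xl + c - x')
  = block_mx P Q Q P *m col_mx (x - xl) (xu - x).
Proof.
move->; rewrite mul_block_col !mulmxBr mulmxBl !subrDDB.
by rewrite [Q *m x - _ + _]addrC.
Qed.

Lemma pospart_sub_negpart (R : realDomainType) m l (M : 'M[R]_(m, l)) :
  pospart M - negpart M = M.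
Proof. exact: subKr. Qed.

Section NoiseFreeDIO.
Variables (R : realFieldType) (n N : nat) (p : 'I_N -> nat).
Variables (E : rel 'I_N) (d : nat).
Variables (A : 'M[R]_n) (C : forall i, 'M[R]_(p i, n)).
Variables (L Gam : forall i, 'M[R]_(n, p i)).
Variables (xl0 xu0 : 'cV[R]_n) (y : forall i, nat -> 'cV[R]_(p i)).
Variable x : nat -> 'cV[R]_n.
Hypothesis x_succ : forall k, x k.+1 = A *m x k.
Hypothesis y_def : forall i k, y i k = C i *m x k.

Local Notation Atil := (Atil A C L Gam).
Local Notation Ahat_i := (Ahat_i A C L Gam).
Local Notation Ahat := (Ahat A C L Gam).
Local Notation xlow := (xlow E d A C L Gam xl0 xu0 y).
Local Notation xup := (xup E d A C L Gam xl0 xu0 y).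
Local Notation xlow0 := (xlow0 E d A C L Gam xl0 xu0 y).
Local Notation xup0 := (xup0 E d A C L Gam xl0 xu0 y).
Local Notation jstar := (jstar E d A C L Gam xl0 xu0 y).
Local Notation jdag := (jdag E d A C L Gam xl0 xu0 y).
Local Notation Hsel := (Hsel E d A C L Gam xl0 xu0 y).
Local Notation errvec := (errvec E d A C L Gam xl0 xu0 y x).
Local Notation inF := (inF E d A C L Gam).

Lemma Atil_consistent j k :
  x k.+1 = Atil j *m x k + (L j *m y j k + Gam j *m y j k.+1).
Proof.
rewrite /Atil !y_def x_succ !mulmxBl mul1mx !mulmxA addrA.
by rewrite subrK subrK.
Qed.

Lemma local_error_step j k :
  col_mx (x k.+1 - xlow0 j k) (xup0 j k - x k.+1)
  = Ahat_i j *m col_mx (x k - xlow j k) (xup j k - x k).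
Proof.
have := Atil_consistent j k; rewrite -[Atil j]pospart_sub_negpart.
by move/(framer_error_step (xlow j k) (xup j k)); rewrite !addrA.
Qed.

Lemma jstar_spec k i s :
  jstar k i s \in Nd E d i /\
  forall j, j \in Nd E d i -> xlow0 j k s 0 <= xlow0 (jstar k i s) k s 0.
Proof.
have : jstar k i s \in [set j in Nd E d i |
    [forall j' in Nd E d i, xlow0 j' k s 0 <= xlow0 j k s 0]].
  case: (arg_maxP (fun j => xlow0 j k s 0) (Nd_refl E d i)) => j Sj j_max.
  apply: (pick_least_mem _ (j := j)).
  by rewrite inE; apply/andP; split; [exact: Sj | exact/forall_inP].
by rewrite inE => /andP[Sj /forall_inP].
Qed.

Lemma jdag_spec k i s :
  jdag k i s \in Nd E d i /\
  forall j, j \in Nd E d i -> xup0 (jdag k i s) k s 0 <= xup0 j k s 0.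
Proof.
have : jdag k i s \in [set j in Nd E d i |
    [forall j' in Nd E d i, xup0 j k s 0 <= xup0 j' k s 0]].
  case: (arg_minP (fun j => xup0 j k s 0) (Nd_refl E d i)) => j Sj j_min.
  apply: (pick_least_mem _ (j := j)).
  by rewrite inE; apply/andP; split; [exact: Sj | exact/forall_inP].
by rewrite inE => /andP[Sj /forall_inP].
Qed.

Lemma xlow_succ k i : xlow i k.+1 = \col_s xlow0 (jstar k i s) k s 0.
Proof.
apply/colP => s; have [Sj j_max] := jstar_spec k i s.
by rewrite /xlow /= [LHS]mxE [RHS]mxE; apply: bigmax_argmax (Nd_refl E d i) Sj j_max.
Qed.

Lemma xup_succ k i : xup i k.+1 = \col_s xup0 (jdag k i s) k s 0.
Proof.
apply/colP => s; have [Sj j_min] := jdag_spec k i s.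
by rewrite /xup /= [LHS]mxE [RHS]mxE; apply: bigmin_argmin (Nd_refl E d i) Sj j_min.
Qed.

Lemma errvec_stk k i r :
  errvec k (stk i r) 0 = col_mx (x k - xlow i k) (xup i k - x k) r 0.
Proof. by rewrite mxE blk_stk off_stk. Qed.

Lemma Ahat_mul_errvec k i r :
  (Ahat *m errvec k) (stk i r) 0
  = (Ahat_i i *m col_mx (x k - xlow i k) (xup i k - x k)) r 0.
Proof.
rewrite blkdiag_mulmxE; congr (mulmx _ _ r 0).
by apply/matrixP => r' c; rewrite (ord1 c) mxE errvec_stk.
Qed.

Lemma Hsel_mul_lid k m (X : 'M[R]_(N * (n + n), m)) i s c :
  (Hsel k *m X) (lid i s) c = X (lid (jstar k i s) s) c.
Proof. by rewrite mul_select_mxE blk_stk off_stk (unsplitK (inl s)). Qed.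

Lemma Hsel_mul_uid k m (X : 'M[R]_(N * (n + n), m)) i s c :
  (Hsel k *m X) (uid i s) c = X (uid (jdag k i s) s) c.
Proof. by rewrite mul_select_mxE blk_stk off_stk (unsplitK (inr s)). Qed.

Lemma errvec_succ k : errvec k.+1 = Hsel k *m Ahat *m errvec k.
Proof.
apply/matrixP => a c; rewrite (ord1 c) -mulmxA.
elim/stk_ind: a => i s.
  rewrite Hsel_mul_lid Ahat_mul_errvec -local_error_step errvec_stk xlow_succ.
  by rewrite !col_mxEu !mxE.
rewrite Hsel_mul_uid Ahat_mul_errvec -local_error_step errvec_stk xup_succ.
by rewrite !col_mxEd !mxE.
Qed.

Lemma Hsel_Ahat_inF k : inF (Hsel k *m Ahat).
Proof.
move=> i s; split.
  exists (jstar k i s); first by case: (jstar_spec k i s).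
  by apply/rowP => b; rewrite [LHS]mxE [RHS]mxE Hsel_mul_lid.
exists (jdag k i s); first by case: (jdag_spec k i s).
by apply/rowP => b; rewrite [LHS]mxE [RHS]mxE Hsel_mul_uid.
Qed.

End NoiseFreeDIO.

Theorem lemma2 (R : realFieldType) (n N : nat) (mw : nat) (p q : 'I_N -> nat)
  (E : rel 'I_N) (d : nat)
  (A : 'M[R]_n) (B : 'M[R]_(n, mw))
  (C : forall i, 'M[R]_(p i, n)) (D : forall i, 'M[R]_(p i, q i))
  (L Gam : forall i, 'M[R]_(n, p i))
  (xl0 xu0 : 'cV[R]_n)
  (x : nat -> 'cV[R]_n) (w : nat -> 'cV[R]_mw) (v : forall i, nat -> 'cV[R]_(q i))
  (y : forall i, nat -> 'cV[R]_(p i))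
  (hx : forall k, x k.+1 = A *m x k + B *m w k)
  (hy : forall i k, y i k = C i *m x k + D i *m v i k)
  (hw : forall k, w k = 0)
  (hv : forall i k, v i k = 0) :
  forall k : nat,
    errvec E d A C L Gam xl0 xu0 y x k.+1
      = Hsel E d A C L Gam xl0 xu0 y k *m Ahat A C L Gam *m errvec E d A C L Gam xl0 xu0 y x k
    /\ inF E d A C L Gam (Hsel E d A C L Gam xl0 xu0 y k *m Ahat A C L Gam).
Proof.
have x_succ k : x k.+1 = A *m x k by rewrite hx hw mulmx0 addr0.
have y_def i k : y i k = C i *m x k by rewrite hy hv mulmx0 addr0.
by move=> k; split; [apply: errvec_succ | apply: Hsel_Ahat_inF].
Qed.
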